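(* Let $P$ be a finite poset and $\mathcal{J}\subseteq\mathrm{Hom}(P,\mathbb{N})$ a poset ideal. The set of minimal markers for $\mathcal{J}$ is finite.
   Context: $\mathbb{N}=\{0,1,2,\dots\}$; $\mathrm{Hom}(P,\mathbb{N})$ is the set of isotone maps $P\to\mathbb{N}$ ordered pointwise; a poset ideal is a down-closed subset. A marker for $\mathcal{J}$ is a pair of a poset ideal $I\subseteq P$ and an isotone map $\alpha:I\to\mathbb{N}$ such that every isotone $\phi:P\to\mathbb{N}$ with $\phi|_I=\alpha$ belongs to $\mathcal{J}$. It is a minimal marker if for no poset ideal $I'\subsetneq I$ is the restriction $\alpha|_{I'}$ a marker for $\mathcal{J}$. *)

From mathcomp Require Import all_boot all_order.
Set Implicit Arguments. Unset Strict Implicit. Unset Printing Implicit Defensive.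
Import Order.TTheory.

Section Markers.
Variables (d : Order.disp_t) (P : finPOrderType d).

Definition isotone (f : P -> nat) : Prop :=
  forall x y : P, (x <= y)%O -> f x <= f y.

Definition down_closed (I : {set P}) : Prop :=
  forall x y : P, (x <= y)%O -> y \in I -> x \in I.

Definition hom_ideal (J : (P -> nat) -> Prop) : Prop :=
  (forall phi, J phi -> isotone phi) /\
  (forall phi psi, J phi -> isotone psi -> (forall x, psi x <= phi x) -> J psi).

(* an isotone map alpha : I -> N, represented by a total function a : P -> nat
   of which only the values on I matter *)
Definition isotone_on (I : {set P}) (a : P -> nat) : Prop :=
  forall x y : P, x \in I -> y \in I -> (x <= y)%O -> a x <= a y.

Definition marker (J : (P -> nat) -> Prop) (I : {set P}) (a : P -> nat) : Prop :=
  down_closed I /\ isotone_on I a /\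
  forall phi, isotone phi -> (forall x, x \in I -> phi x = a x) -> J phi.

Definition minimal_marker (J : (P -> nat) -> Prop) (I : {set P}) (a : P -> nat) : Prop :=
  marker J I a /\
  forall I' : {set P}, down_closed I' -> I' \proper I -> ~ marker J I' a.

End Markers.

From mathcomp Require Import all_boot all_order.
From Stdlib Require Import Classical.

Set Implicit Arguments.
Unset Strict Implicit.
Unset Printing Implicit Defensive.

Import Order.TTheory.

(* The isotone maps outside J, closed upwards in N^P, form an up-set U. By
   Dickson's lemma there is a bound M such that truncating all values of a
   member of U at M stays in U. If a minimal marker (I, a) had a x > M, remove
   the principal filter of x from I: the smaller ideal I' is not a marker, so
   some isotone phi outside J agrees with a on I'. Its truncation at M lies in
   U, hence above some isotone phi0 outside J; but phi0 lies below an isotone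
   extension of a to P, which is in J, so phi0 is in J as well. Thus all
   values of minimal markers are at most M, and there are only finitely many
   pairs (I, a|_I) with such values. *)

Lemma fin_monotone_choice (A : finType) (Q : A -> nat -> Prop) :
  (forall a m n, m <= n -> Q a m -> Q a n) -> (forall a, exists n, Q a n) ->
  exists n, forall a, Q a n.
Proof.
move=> Qmono Qex.
suff [n Qn] : exists n, forall a, a \in enum A -> Q a n.
  by exists n => a; apply: Qn; rewrite mem_enum.
elim: (enum A) => [|a s [n Qn]]; first by exists 0.
have [m Qm] := Qex a.
exists (maxn m n) => b; rewrite inE => /predU1P[->|bs].
- exact: Qmono (leq_maxl m n) Qm.
- exact: Qmono (leq_maxr m n) (Qn b bs).
Qed.

Section Truncation.
Variable T : finType.

Definition truncate (M : nat) (f : T -> nat) (y : T) : nat := minn (f y) M.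

Definition truncatable (U : (T -> nat) -> Prop) : Prop :=
  exists M, forall f, U f -> U (truncate M f).

Definition upclosed_on (s : seq T) (U : (T -> nat) -> Prop) : Prop :=
  forall f g, (forall y, y \in s -> f y <= g y) -> U f -> U g.

Definition slice (U : (T -> nat) -> Prop) (x : T) (v : nat) (g : T -> nat) : Prop :=
  U [eta g with x |-> v].

Lemma truncate_leq M M' f y : M <= M' -> truncate M f y <= truncate M' f y.
Proof. by move=> MM'; rewrite leq_min geq_minl (leq_trans (geq_minr _ _)). Qed.

Section Slices.
Variables (x : T) (s : seq T) (U : (T -> nat) -> Prop).
Hypothesis Uup : upclosed_on (x :: s) U.
Hypothesis IH : forall U, upclosed_on s U -> truncatable U.

Lemma slice_upclosed v : upclosed_on s (slice U x v).
Proof. by move=> f g fg; apply: Uup => y; rewrite inE /=; case: eqP => //= _; apply: fg. Qed.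

Lemma slice_mono v w g : v <= w -> slice U x v g -> slice U x w g.
Proof. by move=> vw; apply: Uup => y _ /=; case: eqP. Qed.

(* Whether some slice contains [g] is decided by the truncation of [g] at the
   bound given by [IH], and there are finitely many truncations. *)
Lemma slice_bound : exists V, forall g, (exists v, slice U x v g) -> slice U x V g.
Proof.
pose W g := exists v, slice U x v g.
have Wup : upclosed_on s W.
  by move=> f g fg [v Uv]; exists v; apply: slice_upclosed fg Uv.
have [MW WMW] := IH Wup.
have [V WV] : exists V, forall h : {ffun T -> 'I_MW.+1},
    W (fun y => h y) -> slice U x V (fun y => h y).
  apply: fin_monotone_choice => [h v w vw Wv /Wv|h]; first exact: slice_mono.
  have [[v Uv]|nW] := classic (W (fun y => h y)); first by exists v.
  by exists 0 => /nW.
exists V => g Wg.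
pose h := [ffun y => inord (truncate MW g y) : 'I_MW.+1].
have hE y : h y = truncate MW g y :> nat by rewrite ffunE inordK // ltnS geq_minr.
apply: slice_upclosed (WV h _) => [y _|]; first by rewrite hE geq_minl.
by apply: Wup (WMW g Wg) => y _; rewrite hE.
Qed.

Lemma slices_truncatable V :
  exists M, forall v g, v <= V -> slice U x v g -> slice U x v (truncate M g).
Proof.
have [M UM] : exists M, forall (v : 'I_V.+1) g,
    slice U x v g -> slice U x v (truncate M g).
  apply: fin_monotone_choice => [v M M' MM' UM g /UM|v].
    by apply: slice_upclosed => y _; apply: truncate_leq.
  exact: IH (@slice_upclosed v).
by exists M => v g; rewrite -ltnS => vV; apply: (UM (Ordinal vV)).
Qed.

End Slices.

Lemma upclosed_truncatable s U : upclosed_on s U -> truncatable U.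
Proof.
elim: s U => [|x s IH] U Uup.
  by exists 0 => f; apply: Uup => y; rewrite in_nil.
have [V UV] := slice_bound Uup IH.
have [M UM] := slices_truncatable Uup IH V.
exists (maxn V M) => f Uf.
have Uf_fx : slice U x (f x) f by apply: Uup Uf => y _ /=; case: eqP => [->|].
have Uf_min : slice U x (minn (f x) V) f.
  by case: leqP => _ //; apply: UV; exists (f x).
apply: Uup (UM _ _ (geq_minr _ _) Uf_min) => y _ /=; case: eqP => [->|_].
- by rewrite leq_min geq_minl (leq_trans (geq_minr _ _) (leq_maxl _ _)).
- exact: truncate_leq (leq_maxr _ _).
Qed.

End Truncation.

Lemma enum_bounded_partial_maps (T : finType) (M : nat)
    (R : {set T} -> (T -> nat) -> Prop) :
  (forall I a, R I a -> forall x, x \in I -> a x <= M) ->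
  exists (n : nat) (f : 'I_n -> {set T} * (T -> nat)),
    forall I a, R I a ->
      exists i : 'I_n, (f i).1 = I /\ (forall x, x \in I -> (f i).2 x = a x).
Proof.
move=> bound; pose F := ({set T} * {ffun T -> 'I_M.+1})%type.
exists #|{: F}|, (fun i => let p : F := enum_val i in (p.1, fun y => val (p.2 y))).
move=> I a /bound aM; exists (enum_rank ((I, [ffun y => inord (a y)]) : F)).
by rewrite enum_rankK /=; split=> // x xI; rewrite ffunE inordK // ltnS aM.
Qed.

Section MinimalMarkers.
Variables (d : Order.disp_t) (P : finPOrderType d) (J : (P -> nat) -> Prop).

Lemma down_closed_setD_up (I : {set P}) (x : P) :
  down_closed I -> down_closed (I :\: [set y | (x <= y)%O]).
Proof.
move=> dI y z yz; rewrite !inE => /andP[xz zI]; rewrite (dI _ _ yz zI) andbT.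
by apply: contra xz => /le_trans; apply.
Qed.

Lemma isotone_extension (I : {set P}) (a phi : P -> nat) :
  down_closed I -> isotone_on I a -> isotone phi ->
  isotone (fun y => if y \in I then a y else maxn (phi y) (\max_(z in I) a z)).
Proof.
move=> dI aI iphi y z yz; case: ifP => yI; case: ifP => zI.
- exact: aI.
- exact: leq_trans (leq_bigmax_cond (F := a) _ yI) (leq_maxr _ _).
- by rewrite (dI _ _ yz zI) in yI.
- by rewrite geq_max !leq_max iphi ?leqnn ?orbT.
Qed.

Lemma not_marker_witness (I : {set P}) (a : P -> nat) :
  down_closed I -> isotone_on I a -> ~ marker J I a ->
  exists phi, [/\ isotone phi, {in I, phi =1 a} & ~ J phi].
Proof.
move=> dI aI nm; apply: NNPP => nex; apply: nm; split=> //; split=> // phi iphi phia.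
by apply: NNPP => nJ; apply: nex; exists phi.
Qed.

Definition dominates_nonmember (f : P -> nat) : Prop :=
  exists phi, [/\ isotone phi, ~ J phi & forall y, phi y <= f y].

Lemma dominates_nonmember_upclosed : upclosed_on (enum P) dominates_nonmember.
Proof.
move=> f g fg [phi [iphi nJ phif]]; exists phi; split=> // y.
by apply: leq_trans (phif y) (fg y _); rewrite mem_enum.
Qed.

Lemma minimal_marker_bounded :
  hom_ideal J ->
  exists M, forall I a, minimal_marker J I a -> forall x, x \in I -> a x <= M.
Proof.
move=> [_ Jdown]; have [M UM] := upclosed_truncatable dominates_nonmember_upclosed.
exists M => I a [[dI [aI aJ]] amin] x xI; rewrite leqNgt; apply/negP => ltMa.
pose I' := I :\: [set y | (x <= y)%O].
have dI' : down_closed I' := down_closed_setD_up dI.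
have I'I : I' \proper I.
  by apply/properP; split; [apply: subsetDl | exists x; rewrite // !inE lexx].
have aI' : isotone_on I' a.
  by move=> y z; rewrite !inE => /andP[_ yI] /andP[_ zI]; apply: aI.
have [phi [iphi phia nJphi]] := not_marker_witness dI' aI' (amin I' dI' I'I).
have [phi0 [iphi0 nJphi0 phi0_le]] : dominates_nonmember (truncate M phi).
  by apply: UM; exists phi.
pose psi y := if y \in I then a y else maxn (phi y) (\max_(z in I) a z).
have Jpsi : J psi by apply: aJ (isotone_extension dI aI iphi) _ => y yI; rewrite /psi yI.
apply: nJphi0; apply: Jdown Jpsi iphi0 _ => y; apply: leq_trans (phi0_le y) _.
rewrite /psi /truncate; case: ifP => yI; last exact: leq_trans (geq_minl _ _) (leq_maxl _ _).
have [xy|nxy] := boolP (x <= y)%O.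
- by rewrite geq_min (ltnW (leq_trans ltMa (aI _ _ xI yI xy))) orbT.
- by rewrite -phia ?geq_minl // !inE nxy yI.
Qed.

End MinimalMarkers.

Theorem proposition1p8 (d : Order.disp_t) (P : finPOrderType d)
  (J : (P -> nat) -> Prop) :
  hom_ideal J ->
  exists (n : nat) (f : 'I_n -> {set P} * (P -> nat)),
    forall (I : {set P}) (a : P -> nat), minimal_marker J I a ->
      exists i : 'I_n, (f i).1 = I /\ (forall x, x \in I -> (f i).2 x = a x).
Proof.
move=> hJ; have [M bound] := minimal_marker_bounded hJ.
exact: enum_bounded_partial_maps bound.
Qed.
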